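(* Let $0<q<1$ and let $a,b\in\mathbb{C}\setminus\{0\}$ be generic (such that all normalizing factors below are finite and nonzero, e.g. $a^2b^2\notin\{q^{-j}:j\in\mathbb{Z}_{\ge0}\}$). For the monic Askey-Wilson polynomials $P_n(z;a,b,c,d\,|\,q)$ one has, as Laurent polynomials in $z$, for all $n\ge0$: $$P_{2n}(z;a,b,-a,-b\,|\,q)=P_n(z^2;a^2,b^2,-1,-q\,|\,q^2),\qquad P_{2n+1}(z;a,b,-a,-b\,|\,q)=(z+z^{-1})\,P_n(z^2;a^2,b^2,-q,-q^2\,|\,q^2).$$
   Context: $(x;q)_k=\prod_{j=0}^{k-1}(1-xq^j)$, $(x_1,\dots,x_r;q)_k=\prod_i(x_i;q)_k$. The monic Askey-Wilson polynomial is $P_n(z;a,b,c,d\,|\,q)=\frac{(ab,ac,ad;q)_n}{a^n(abcdq^{n-1};q)_n}\sum_{k=0}^n\frac{(q^{-n},q^{n-1}abcd,az,az^{-1};q)_k}{(ab,ac,ad,q;q)_k}q^k$, a symmetric Laurent polynomial in $z$ (invariant under $z\mapsto z^{-1}$) of the form $z^n+z^{-n}+$ lower terms, symmetric in $a,b,c,d$ (extended by continuity where formulas degenerate). *)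

From HB Require Import structures.
From mathcomp Require Import all_boot all_order all_algebra.
Set Implicit Arguments. Unset Strict Implicit. Unset Printing Implicit Defensive.
Import Order.TTheory GRing.Theory Num.Theory.
Local Open Scope ring_scope.

Definition qpoch {R : ringType} (x q : R) (k : nat) : R :=
  \prod_(j < k) (1 - x * q ^+ j).

Definition AW {R : fieldType} (n : nat) (z a b c d q : R) : R :=
  (qpoch (a * b) q n * qpoch (a * c) q n * qpoch (a * d) q n)
  / (a ^+ n * qpoch (a * b * c * d * q ^ (n%:Z - 1)) q n)
  * \sum_(k < n.+1)
      (qpoch (q ^ (- n%:Z)) q k * qpoch (q ^ (n%:Z - 1) * (a * b * c * d)) q k
       * qpoch (a * z) q k * qpoch (a * z^-1) q k)
      / (qpoch (a * b) q k * qpoch (a * c) q k * qpoch (a * d) q k * qpoch q q k)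
      * q ^+ k.

(* Genericity: the normalizing factor of P_n(.;a,b,c,d|q) in the defining
   formula is finite and nonzero (a <> 0, (ab,ac,ad;q)_n <> 0,
   (abcd q^(n-1);q)_n <> 0); these also make all denominators
   (ab,ac,ad;q)_k, k <= n, nonzero. *)
Definition AW_generic {R : fieldType} (n : nat) (a b c d q : R) : Prop :=
  [/\ a != 0, qpoch (a * b) q n != 0, qpoch (a * c) q n != 0,
      qpoch (a * d) q n != 0
    & qpoch (a * b * c * d * q ^ (n%:Z - 1)) q n != 0].

From HB Require Import structures.
From mathcomp Require Import all_boot all_order all_algebra.
From mathcomp Require Import ring.
Import Order.TTheory GRing.Theory Num.Theory.
Local Open Scope ring_scope.

(* Write P_n as a polynomial in x = z + 1/z.  It is then an eigenfunction, with
   eigenvalue (q^-n - 1)(1 - abcd q^(n-1)), of the Askey-Wilson q-difference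
   operator L, which is lower bidiagonal on the basis (az, a/z; q)_k, so that the
   eigen-equation for the defining sum telescopes.  Since the diagonal entries are
   pairwise distinct, P_n is the only monic eigenpolynomial of degree n; checking
   the eigen-equation at the points z = zeta m (zeta^4 = -1, m = 1, 2, ...) suffices.
   For (c, d) = (-a, -b) the operator intertwines with z |-> z^2, i.e. x |-> x^2 - 2
   and q |-> q^2: on G(x^2 - 2) it acts as L(a^2, b^2, -1, -q; q^2) on G, and on
   x G(x^2 - 2) as x (L(a^2, b^2, -q, -q^2; q^2) / q + const) on G, with matching
   eigenvalues.  Hence both sides of each identity are the same monic
   eigenpolynomial. *)

Section QPochhammer.
Context {R : comNzRingType}.
Implicit Types x q : R.

Lemma qpoch0 x q : qpoch x q 0 = 1.
Proof. by rewrite /qpoch big_ord0. Qed.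

Lemma qpochSr x q k : qpoch x q k.+1 = qpoch x q k * (1 - x * q ^+ k).
Proof. by rewrite /qpoch big_ord_recr. Qed.

Lemma qpochSl x q k : qpoch x q k.+1 = (1 - x) * qpoch (x * q) q k.
Proof.
rewrite /qpoch big_ord_recl expr0 mulr1; congr (_ * _).
by apply: eq_bigr => i _; rewrite exprS mulrA.
Qed.

Lemma qpochSSr x q m :
  qpoch x q m.+2 = qpoch x q m * (1 - x * q ^+ m) * (1 - x * q ^+ m * q).
Proof. by rewrite !qpochSr exprS [q * _]mulrC mulrA. Qed.

Lemma qpochSSl x q m : qpoch x q m.+2 = (1 - x) * (1 - x * q) * qpoch (x * q * q) q m.
Proof. by rewrite !qpochSl mulrA. Qed.

Lemma qpochSlr x q m :
  qpoch x q m.+2 = (1 - x) * qpoch (x * q) q m * (1 - x * q * q ^+ m).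
Proof. by rewrite qpochSl qpochSr mulrA. Qed.

End QPochhammer.

Lemma qpoch_factor_neq0 {R : idomainType} {x q : R} {k n : nat} :
  (k < n)%N -> qpoch x q n != 0 -> 1 - x * q ^+ k != 0.
Proof. by move=> kn /prodf_neq0 /(_ (Ordinal kn) isT). Qed.

Lemma qpoch_leq_neq0 {R : idomainType} {x q : R} {k n : nat} :
  (k <= n)%N -> qpoch x q n != 0 -> qpoch x q k != 0.
Proof.
move=> kn /prodf_neq0 nz; apply/prodf_neq0 => i _.
exact: (nz (widen_ord kn i)).
Qed.

Lemma bidiagonal_eigenvector_sum {R : comNzRingType} n (e l m f : nat -> R) :
  l 0%N = 0 -> (forall k, (k < n)%N -> e k.+1 * m k.+1 = (l n - l k) * e k) ->
  \sum_(k < n) e k.+1 * (l k.+1 * f k.+1 + m k.+1 * f k)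
  = l n * \sum_(k < n.+1) e k * f k.
Proof.
move=> l0 em.
suff partial j : (j <= n)%N -> \sum_(k < j) e k.+1 * (l k.+1 * f k.+1 + m k.+1 * f k)
    = e j * l j * f j + l n * \sum_(k < j) e k * f k.
  by rewrite partial // [in RHS]big_ord_recr /=; ring.
elim: j => [|j IH] jn; first by rewrite !big_ord0 l0; ring.
rewrite !big_ord_recr /= IH ?(ltnW jn) // mulrDr [e j.+1 * (m _ * _)]mulrA em //; ring.
Qed.

Lemma size_sub_lead {R : fieldType} (p r : {poly R}) N :
  size p = N.+1 -> (size r <= N.+1)%N -> (size (r - (r`_N / lead_coef p) *: p)%R <= N)%N.
Proof.
move=> sp sr; have lp0 : lead_coef p != 0 by rewrite lead_coef_eq0 -size_poly_eq0 sp.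
apply/leq_sizeP => j; rewrite leq_eqVlt coefB coefZ => /orP[/eqP <-|Nj].
  have -> : p`_N = lead_coef p by rewrite lead_coefE sp.
  by rewrite divfK // subrr.
by rewrite !(leq_sizeP _ _ _ _ Nj) ?sp ?mulr0 ?subrr.
Qed.

Ltac field_nz := field; by repeat (apply/andP; split).

Section AskeyWilsonOperator.
Context {R : fieldType}.
Implicit Types (a b c d q s x z : R) (p r : {poly R}).

Definition joukowski z := z + z^-1.

Lemma joukowski_inj x y : x != 0 -> y != 0 -> x * y != 1 ->
  joukowski x = joukowski y -> x = y.
Proof.
move=> x0 y0 xy1 Jxy; apply/eqP; rewrite -subr_eq0.
have -> : x - y = x * y * (joukowski x - joukowski y) / (x * y - 1).
  by rewrite /joukowski; field; rewrite subr_eq0 xy1 x0 y0.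
by rewrite Jxy subrr mulr0 mul0r.
Qed.

Definition aw_factor c : {poly R} := (- c)%:P * 'X + (1 + c ^+ 2)%:P.

Definition aw_basis a q k : {poly R} := \prod_(j < k) aw_factor (a * q ^+ j).

Lemma horner_aw_basis a q k z : z != 0 ->
  (aw_basis a q k).[joukowski z] = qpoch (a * z) q k * qpoch (a * z^-1) q k.
Proof.
move=> z0; rewrite /aw_basis /qpoch horner_prod -big_split /=.
by apply: eq_bigr => i _; rewrite hornerMXaddC !hornerC /joukowski; field.
Qed.

Lemma size_aw_factor c : c != 0 -> size (aw_factor c) = 2.
Proof.
move=> c0; rewrite size_MXaddC polyC_eq0 oppr_eq0 (negPf c0) /=.
by rewrite size_polyC oppr_eq0 c0.
Qed.

Lemma lead_coef_aw_factor c : c != 0 -> lead_coef (aw_factor c) = - c.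
Proof. by move=> c0; rewrite lead_coefE size_aw_factor // coefD coefMX !coefC addr0. Qed.

Lemma size_aw_basis a q k : a != 0 -> q != 0 -> size (aw_basis a q k) = k.+1.
Proof.
move=> a0 q0; rewrite size_prod => [|i _]; last first.
  by rewrite -size_poly_eq0 size_aw_factor ?mulf_neq0 ?expf_neq0.
under eq_bigr => i _ do rewrite size_aw_factor ?mulf_neq0 ?expf_neq0 //.
by rewrite sum_nat_const card_ord muln2 -addnn -addSn addnK.
Qed.

Lemma lead_coef_aw_basis a q k : a != 0 -> q != 0 ->
  lead_coef (aw_basis a q k) = \prod_(j < k) - (a * q ^+ j).
Proof.
move=> a0 q0; rewrite lead_coef_prod.
by apply: eq_bigr => i _; rewrite lead_coef_aw_factor ?mulf_neq0 ?expf_neq0.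
Qed.

Definition aw_weight a b c d q z :=
  (1 - a * z) * (1 - b * z) * (1 - c * z) * (1 - d * z)
  / ((1 - z ^+ 2) * (1 - q * z ^+ 2)).

Definition aw_op a b c d q p z :=
  aw_weight a b c d q z * (p.[joukowski (q * z)] - p.[joukowski z])
  + aw_weight a b c d q z^-1 * (p.[joukowski (z / q)] - p.[joukowski z]).

Definition aw_eigval q s (n : nat) := ((q ^+ n)^-1 - 1) * (1 - s * q ^+ n / q).

Definition aw_subdiag a b c d q (k : nat) :=
  (1 - (q ^+ k)^-1) * (1 - a * b * q ^+ k / q) * (1 - a * c * q ^+ k / q)
  * (1 - a * d * q ^+ k / q).

Definition aw_regular q z :=
  [/\ z != 0, 1 - z ^+ 2 != 0, 1 - q * z ^+ 2 != 0 & z ^+ 2 - q != 0].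

Lemma aw_eigval0 q s : aw_eigval q s 0 = 0.
Proof. by rewrite /aw_eigval expr0 invr1 subrr mul0r. Qed.

Lemma aw_opC a b c d q e z : aw_op a b c d q e%:P z = 0.
Proof. by rewrite /aw_op !hornerC !subrr !mulr0 addr0. Qed.

Lemma aw_opD a b c d q p1 p2 z :
  aw_op a b c d q (p1 + p2) z = aw_op a b c d q p1 z + aw_op a b c d q p2 z.
Proof. by rewrite /aw_op !hornerD; ring. Qed.

Lemma aw_opZ a b c d q e p z : aw_op a b c d q (e *: p) z = e * aw_op a b c d q p z.
Proof. by rewrite /aw_op !hornerZ; ring. Qed.

Lemma aw_opB a b c d q p1 p2 z :
  aw_op a b c d q (p1 - p2) z = aw_op a b c d q p1 z - aw_op a b c d q p2 z.
Proof. by rewrite /aw_op !hornerD !hornerN; ring. Qed.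

Lemma aw_op_sum a b c d q (I : Type) (r : seq I) (P : pred I) (F : I -> {poly R}) z :
  aw_op a b c d q (\sum_(i <- r | P i) F i) z
  = \sum_(i <- r | P i) aw_op a b c d q (F i) z.
Proof.
apply: (big_morph (fun p => aw_op a b c d q p z)) => [p1 p2|]; first exact: aw_opD.
by rewrite -polyC0 aw_opC.
Qed.

Lemma aw_regular_inv {q z} :
  aw_regular q z -> 1 - z^-1 ^+ 2 != 0 /\ 1 - q * z^-1 ^+ 2 != 0.
Proof.
move=> [z0 h1 h2 h3]; have z20 : (z ^+ 2)^-1 != 0 by rewrite invr_eq0 expf_neq0.
split.
  have -> : 1 - z^-1 ^+ 2 = - (1 - z ^+ 2) / z ^+ 2 by field.
  by rewrite mulf_neq0 ?oppr_eq0.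
have -> : 1 - q * z^-1 ^+ 2 = (z ^+ 2 - q) / z ^+ 2 by field.
exact: mulf_neq0.
Qed.

Lemma aw_op_basisS a b c d q k z : q != 0 -> aw_regular q z ->
  aw_op a b c d q (aw_basis a q k.+1) z
  = aw_eigval q (a * b * c * d) k.+1 * (aw_basis a q k.+1).[joukowski z]
    + aw_subdiag a b c d q k.+1 * (aw_basis a q k).[joukowski z].
Proof.
move=> q0 zreg; have [z0 h1 h2 h3] := zreg; have [h4 h5] := aw_regular_inv zreg.
have h1' : z ^+ 2 - 1 != 0 by rewrite -oppr_eq0 opprB.
have qz0 : q * z != 0 by rewrite mulf_neq0.
have zq0 : z / q != 0 by rewrite mulf_neq0 ?invr_eq0.
rewrite /aw_op !horner_aw_basis // /aw_weight /aw_eigval /aw_subdiag.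
case: k => [|m].
  by rewrite !qpochSr !qpoch0 !expr0 !expr1; field_nz.
rewrite (qpochSlr (a * z)) (qpochSlr (a * z^-1)) (qpochSSr (a * (q * z))).
rewrite (qpochSSl (a * (q * z)^-1)) (qpochSSl (a * (z / q))).
rewrite (qpochSSr (a * (z / q)^-1)) (qpochSl (a * z)) (qpochSl (a * z^-1)).
have -> : a * (q * z) = a * z * q by ring.
have -> : a * (q * z)^-1 * q * q = a * z^-1 * q by field_nz.
have -> : a * (z / q) * q * q = a * z * q by field_nz.
have -> : a * (z / q)^-1 = a * z^-1 * q by field_nz.
rewrite !exprS; have Q0 : q ^+ m != 0 by rewrite expf_neq0.
set Q := q ^+ m; field_nz.
Qed.

Lemma aw_op_triangular a b c d q m r : a != 0 -> q != 0 -> (size r <= m.+1)%N ->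
  exists2 s : {poly R}, (size s <= m)%N & forall z, aw_regular q z ->
    aw_op a b c d q r z = aw_eigval q (a * b * c * d) m * r.[joukowski z] + s.[joukowski z].
Proof.
move=> a0 q0; elim: m r => [|m IH] r sr.
  exists 0; rewrite ?size_poly0 // => z _.
  by rewrite (size1_polyC sr) aw_opC aw_eigval0 horner0 mul0r addr0.
set B := aw_basis a q m.+1; set e := r`_m.+1 / lead_coef B.
have sB : size B = m.+2 by rewrite size_aw_basis.
have [s' ss' Hs'] := IH _ (size_sub_lead _ _ _ sB sr).
set lam := aw_eigval q (a * b * c * d).
exists ((lam m - lam m.+1) *: (r - e *: B)
        + (e * aw_subdiag a b c d q m.+1) *: aw_basis a q m + s').
  rewrite (leq_trans (size_polyD _ _)) // geq_max (leq_trans ss') // andbT.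
  rewrite (leq_trans (size_polyD _ _)) // geq_max !(leq_trans (size_scale_leq _ _)) //.
    exact: size_sub_lead.
  by rewrite size_aw_basis.
move=> z zreg; rewrite -{1}(subrK (e *: B) r) aw_opD aw_opZ aw_op_basisS // Hs' //.
by rewrite !(hornerD, hornerN, hornerZ) /lam /e /B; ring.
Qed.

Definition aw_coef a b c d q (n k : nat) :=
  (qpoch (a * b) q n * qpoch (a * c) q n * qpoch (a * d) q n)
  / (a ^+ n * qpoch (a * b * c * d * q ^ (n%:Z - 1)) q n)
  * ((qpoch (q ^ (- n%:Z)) q k * qpoch (q ^ (n%:Z - 1) * (a * b * c * d)) q k)
     / (qpoch (a * b) q k * qpoch (a * c) q k * qpoch (a * d) q k * qpoch q q k)
     * q ^+ k).

Definition aw_poly a b c d q n : {poly R} :=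
  \sum_(k < n.+1) aw_coef a b c d q n k *: aw_basis a q k.

Lemma AW_horner a b c d q n z : z != 0 ->
  AW n z a b c d q = (aw_poly a b c d q n).[joukowski z].
Proof.
move=> z0; rewrite /AW /aw_poly horner_sum mulr_sumr.
by apply: eq_bigr => k _; rewrite hornerZ horner_aw_basis // /aw_coef; ring.
Qed.

Lemma expfz_pred q (n : nat) : q != 0 -> q ^ (n%:Z - 1) = q ^+ n / q.
Proof. by move=> q0; rewrite expfzDr // exprN1 -exprnP. Qed.

Lemma qpoch_invqn a q n : q != 0 ->
  qpoch (q ^+ n)^-1 q n * \prod_(j < n) - (a * q ^+ j) * q ^+ n = a ^+ n * qpoch q q n.
Proof.
move=> q0; have const x : x ^+ n = \prod_(j < n) x by rewrite prodr_const card_ord.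
rewrite (const q) (const a) /qpoch (reindex_inj rev_ord_inj) /= -!big_split /=.
apply: eq_bigr => j _; rewrite -const.
have -> : q ^+ n = q ^+ (n - j.+1) * q ^+ j.+1 by rewrite -exprD subnK.
have [A0 B0] : q ^+ (n - j.+1) != 0 /\ q ^+ j != 0 by rewrite !expf_neq0.
by rewrite exprS; field_nz.
Qed.

Lemma coef_aw_poly a b c d q n j :
  (aw_poly a b c d q n)`_j = \sum_(k < n.+1) aw_coef a b c d q n k * (aw_basis a q k)`_j.
Proof. by rewrite coef_sum; apply: eq_bigr => k _; rewrite coefZ. Qed.

Lemma aw_basis0 a q : aw_basis a q 0 = 1.
Proof. by rewrite /aw_basis big_ord0. Qed.

Section AskeyWilsonPolynomial.
Variables (a b c d q : R) (n : nat).
Hypotheses (q0 : q != 0) (gen : AW_generic n a b c d q) (nzq : qpoch q q n != 0).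

Lemma aw_coefS k : (k < n)%N ->
  aw_coef a b c d q n k.+1 * aw_subdiag a b c d q k.+1
  = (aw_eigval q (a * b * c * d) n - aw_eigval q (a * b * c * d) k) * aw_coef a b c d q n k.
Proof.
move=> kn; have [_ nz1 nz2 nz3 _] := gen.
have nzk x : qpoch x q n != 0 -> qpoch x q k != 0 /\ 1 - x * q ^+ k != 0.
  by move=> nz; rewrite (qpoch_leq_neq0 (ltnW kn) nz) (qpoch_factor_neq0 kn nz).
have [p1 f1] := nzk _ nz1; have [p2 f2] := nzk _ nz2.
have [p3 f3] := nzk _ nz3; have [p4 f4] := nzk _ nzq.
rewrite /aw_coef; set N := _ / (a ^+ n * _).
rewrite /aw_subdiag /aw_eigval !qpochSr -exprnN expfz_pred // !exprS.
have Qk : q ^+ k != 0 by rewrite expf_neq0.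
have Qn : q ^+ n != 0 by rewrite expf_neq0.
set Q := q ^+ k; set P := q ^+ n; field_nz.
Qed.

Lemma aw_op_aw_poly z : aw_regular q z ->
  aw_op a b c d q (aw_poly a b c d q n) z
  = aw_eigval q (a * b * c * d) n * (aw_poly a b c d q n).[joukowski z].
Proof.
move=> zreg.
rewrite /aw_poly aw_op_sum big_ord_recl aw_opZ aw_basis0 -polyC1 aw_opC mulr0 add0r.
under eq_bigr => k _ do rewrite /= /bump leq0n add1n aw_opZ aw_op_basisS //.
rewrite horner_sum; under [in RHS]eq_bigr => k _ do rewrite hornerZ.
rewrite (bidiagonal_eigenvector_sum n (aw_coef a b c d q n) (aw_eigval q (a * b * c * d))
  (aw_subdiag a b c d q) (fun k => (aw_basis a q k).[joukowski z])) //.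
  exact: aw_eigval0.
exact: aw_coefS.
Qed.

Lemma aw_poly_topcoef : (aw_poly a b c d q n)`_n = 1.
Proof.
have [a0 nzab nzac nzad nzabcd] := gen.
rewrite coef_aw_poly big_ord_recr /= big1 => [|k _]; last first.
  by rewrite nth_default ?mulr0 // size_aw_basis.
rewrite add0r [_`_n](_ : _ = lead_coef (aw_basis a q n)); last first.
  by rewrite lead_coefE size_aw_basis.
rewrite lead_coef_aw_basis // /aw_coef -exprnN [_ * (a * b * c * d)]mulrC.
have := qpoch_invqn a q n q0; have an0 : a ^+ n != 0 by rewrite expf_neq0.
set P := \prod_(j < n) _; set X := qpoch (q ^- n) q n.
set Y := qpoch (a * b * c * d * _) q n => XP.
transitivity (X * P * q ^+ n / (a ^+ n * qpoch q q n)); first by field_nz.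
by rewrite XP divff // mulf_neq0.
Qed.

Lemma size_aw_poly : size (aw_poly a b c d q n) = n.+1.
Proof.
have [a0 _ _ _ _] := gen.
apply/eqP; rewrite eqn_leq; apply/andP; split.
  apply/leq_sizeP => j jn; rewrite coef_aw_poly big1 // => k _.
  by rewrite nth_default ?mulr0 // size_aw_basis // (leq_trans _ jn).
rewrite ltnNge; apply/negP => /leq_sizeP/(_ n (leqnn n)).
by rewrite aw_poly_topcoef; apply/eqP/oner_neq0.
Qed.

Lemma aw_poly_monic : aw_poly a b c d q n \is monic.
Proof. by rewrite monicE lead_coefE size_aw_poly aw_poly_topcoef. Qed.

End AskeyWilsonPolynomial.

Definition chebyshev2 : {poly R} := 'X^2 - 2%:P.

Lemma horner_comp_chebyshev2 p z : z != 0 ->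
  (p \Po chebyshev2).[joukowski z] = p.[joukowski (z ^+ 2)].
Proof. by move=> z0; rewrite horner_comp !hornerE /joukowski; congr p.[_]; field_nz. Qed.

Lemma size_comp_chebyshev2 p n : size p = n.+1 -> size (p \Po chebyshev2) = (2 * n).+1.
Proof.
move=> sp; have := size_comp_poly p chebyshev2; rewrite sp size_XnsubC //= mulnC => <-.
by rewrite prednK // lt0n size_poly_eq0 comp_poly_eq0 ?size_XnsubC // -size_poly_eq0 sp.
Qed.

Lemma monic_comp_chebyshev2 p : p \is monic -> p \Po chebyshev2 \is monic.
Proof.
move=> /monicP lp; apply/monicP.
rewrite lead_coef_comp /chebyshev2 ?size_XnsubC // lp.
by rewrite (monicP (monicXnsubC _ (ltn0Sn 1))) expr1n mul1r.
Qed.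

Lemma aw_regular_sqr {q z} : aw_regular (q ^+ 2) (z ^+ 2) -> aw_regular q z.
Proof.
case=> z0 h1 h2 h3; split; first by move: z0; rewrite expf_eq0.
- move: h1; rewrite (_ : _ - _ = (1 - z ^+ 2) * (1 + z ^+ 2)); last by ring.
  by rewrite mulf_eq0 negb_or => /andP[].
- move: h2; rewrite (_ : _ - _ = (1 - q * z ^+ 2) * (1 + q * z ^+ 2)); last by ring.
  by rewrite mulf_eq0 negb_or => /andP[].
move: h3; rewrite (_ : _ - _ = (z ^+ 2 - q) * (z ^+ 2 + q)); last by ring.
by rewrite mulf_eq0 negb_or => /andP[].
Qed.

Lemma aw_op_comp_even a b q p z : q != 0 -> aw_regular (q ^+ 2) (z ^+ 2) ->
  aw_op a b (- a) (- b) q (p \Po chebyshev2) z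
  = aw_op (a ^+ 2) (b ^+ 2) (-1) (- q) (q ^+ 2) p (z ^+ 2).
Proof.
move=> q0 zreg2; have [z0 h1 h2 h3] := aw_regular_sqr zreg2; have [z20 k1 k2 k3] := zreg2.
have h1' : z ^+ 2 - 1 != 0 by rewrite -oppr_eq0 opprB.
have k1' : (z ^+ 2) ^+ 2 - 1 != 0 by rewrite -oppr_eq0 opprB.
have k2' : 1 - q ^+ 2 * z ^+ 4 != 0 by rewrite (exprM z 2 2).
rewrite /aw_op !horner_comp_chebyshev2 ?mulf_neq0 ?invr_eq0 //.
by rewrite !exprMn !exprVn /aw_weight; field_nz.
Qed.

Lemma aw_op_comp_odd a b q p z : q != 0 -> aw_regular (q ^+ 2) (z ^+ 2) ->
  aw_op a b (- a) (- b) q ((p \Po chebyshev2) * 'X) z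
  = joukowski z * (aw_op (a ^+ 2) (b ^+ 2) (- q) (- q ^+ 2) (q ^+ 2) p (z ^+ 2) / q
                   + (q^-1 - 1) * (1 - a ^+ 2 * b ^+ 2) * p.[joukowski (z ^+ 2)]).
Proof.
move=> q0 zreg2; have [z0 h1 h2 h3] := aw_regular_sqr zreg2; have [z20 k1 k2 k3] := zreg2.
have h1' : z ^+ 2 - 1 != 0 by rewrite -oppr_eq0 opprB.
have k1' : (z ^+ 2) ^+ 2 - 1 != 0 by rewrite -oppr_eq0 opprB.
have k2' : 1 - q ^+ 2 * z ^+ 4 != 0 by rewrite (exprM z 2 2).
rewrite /aw_op !hornerMX !horner_comp_chebyshev2 ?mulf_neq0 ?invr_eq0 //.
rewrite !exprMn !exprVn /aw_weight.
set u0 := p.[_ (z ^+ 2)]; set u1 := p.[_ (q ^+ 2 * _)]; set u2 := p.[_ (_ / q ^+ 2)].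
by rewrite /joukowski; field_nz.
Qed.

Lemma aw_eigval_even a b q n : q != 0 ->
  aw_eigval (q ^+ 2) (a ^+ 2 * b ^+ 2 * -1 * - q) n = aw_eigval q (a * b * - a * - b) (2 * n).
Proof.
move=> q0; rewrite /aw_eigval -exprM; have Q0 : q ^+ (2 * n) != 0 by rewrite expf_neq0.
by set Q := q ^+ (2 * n); field_nz.
Qed.

Lemma aw_eigval_odd a b q n : q != 0 ->
  aw_eigval (q ^+ 2) (a ^+ 2 * b ^+ 2 * - q * - q ^+ 2) n / q
    + (q^-1 - 1) * (1 - a ^+ 2 * b ^+ 2)
  = aw_eigval q (a * b * - a * - b) (2 * n).+1.
Proof.
move=> q0; rewrite /aw_eigval -exprM [q ^+ (2 * n).+1]exprS.
have Q0 : q ^+ (2 * n) != 0 by rewrite expf_neq0.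
by set Q := q ^+ (2 * n); field_nz.
Qed.

End AskeyWilsonOperator.

Section Uniqueness.
Context {R : numClosedFieldType}.
Implicit Types (a b c d q z : R) (p : {poly R}).

(* (sqrtC 'i * m)^4 = - m^4 < 0, so none of the regularity conditions can fail. *)
Lemma aw_regular_sqr_zeta q (n : nat) : 0 < q ->
  aw_regular (q ^+ 2) ((sqrtC 'i * n.+1%:R) ^+ 2).
Proof.
move=> q_gt0; set N := n.+1%:R : R.
have N_gt0 : 0 < N ^+ 4 by rewrite exprn_gt0 ?ltr0Sn.
have z4 : ((sqrtC 'i * N) ^+ 2) ^+ 2 = - N ^+ 4.
  by rewrite -exprM exprMn (exprM (sqrtC 'i) 2 2) sqrtCK sqrCi mulN1r.
rewrite /aw_regular z4; split.
- by rewrite expf_neq0 // mulf_neq0 ?sqrtC_eq0 ?neq0Ci // gt_eqF ?ltr0Sn.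
- by rewrite opprK gt_eqF // addr_gt0.
- by rewrite mulrN opprK gt_eqF // addr_gt0 // mulr_gt0 // exprn_gt0.
by rewrite lt_eqF // -opprD oppr_lt0 addr_gt0 // exprn_gt0.
Qed.

Lemma poly_eq0_on_aw_regular q p : 0 < q ->
  (forall z, aw_regular (q ^+ 2) (z ^+ 2) -> p.[joukowski z] = 0) -> p = 0.
Proof.
move=> q_gt0 vanish; apply/eqP; apply: contraT => p0.
pose pt (i : nat) : R := sqrtC 'i * i.+1%:R.
have pt_neq0 i : pt i != 0 by rewrite mulf_neq0 ?sqrtC_eq0 ?neq0Ci // pnatr_eq0.
have ptM i j : pt i * pt j = 'i * (i.+1 * j.+1)%:R by rewrite mulrACA -expr2 sqrtCK natrM.
have ptM_neq1 i j : pt i * pt j != 1.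
  apply/negP => /eqP E; have : ('i * (i.+1 * j.+1)%:R) ^+ 2 = 1 :> R by rewrite -ptM E expr1n.
  rewrite exprMn sqrCi mulN1r => /eqP; rewrite lt_eqF // (lt_trans _ ltr01) //.
  by rewrite oppr_lt0 exprn_gt0 // ltr0n muln_gt0.
have := max_poly_roots p0 (rs := [seq joukowski (pt i) | i <- iota 0 (size p)]).
rewrite size_map size_iota ltnn; apply.
  by apply/allP => _ /mapP[i _ ->]; apply/eqP/vanish/aw_regular_sqr_zeta.
rewrite map_inj_in_uniq ?iota_uniq // => i j _ _ Jij.
have /mulfI ij := joukowski_inj _ _ (pt_neq0 i) (pt_neq0 j) (ptM_neq1 i j) Jij.
by apply/eqP; rewrite -eqSS -(eqr_nat R) ij // sqrtC_eq0 neq0Ci.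
Qed.

Lemma aw_op_eigen_eq0 a b c d q N p : a != 0 -> 0 < q -> (size p <= N)%N ->
  (forall m, (m < N)%N -> aw_eigval q (a * b * c * d) m != aw_eigval q (a * b * c * d) N) ->
  (forall z, aw_regular (q ^+ 2) (z ^+ 2) ->
     aw_op a b c d q p z = aw_eigval q (a * b * c * d) N * p.[joukowski z]) ->
  p = 0.
Proof.
move=> a0 q_gt0 spN lam_neq eigen; apply/eqP; apply: contraT => p0.
set lam := aw_eigval q (a * b * c * d) in lam_neq eigen.
have sp : size p = (size p).-1.+1 by rewrite prednK // size_poly_gt0.
set m := (size p).-1 in sp; have mN : (m < N)%N by rewrite -sp.
have [s sm op_p] := aw_op_triangular a b c d q m p a0 (lt0r_neq0 q_gt0) (eq_leq sp).
have : (lam N - lam m) *: p - s = 0.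
  apply: (poly_eq0_on_aw_regular _ _ q_gt0) => z zreg.
  have := eigen z zreg; rewrite op_p => [E|]; last exact: aw_regular_sqr zreg.
  rewrite hornerD hornerN hornerZ.
  transitivity (lam N * p.[joukowski z] - (lam m * p.[joukowski z] + s.[joukowski z])).
    by ring.
  by rewrite E subrr.
move/(congr1 (coefp m)); rewrite /= coefB coefZ coef0 (nth_default _ sm) subr0.
move/eqP; rewrite mulf_eq0 subr_eq0 eq_sym (negPf (lam_neq m mN)) /=.
by rewrite -lead_coefE lead_coef_eq0 (negPf p0).
Qed.

Lemma qpoch_qq_neq0 q n : 0 < q -> q < 1 -> qpoch q q n != 0.
Proof.
move=> q_gt0 q_lt1; apply/prodf_neq0 => j _.
by rewrite -exprS subr_eq0 eq_sym lt_eqF // exprn_ilt1 ?ltW.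
Qed.

Lemma aw_eigval_neq q s m N : 0 < q -> q < 1 -> (m < N)%N ->
  qpoch (s * q ^ (N%:Z - 1)) q N != 0 -> aw_eigval q s m != aw_eigval q s N.
Proof.
move=> q_gt0 q_lt1 mN nz; have q0 := lt0r_neq0 q_gt0.
have := qpoch_factor_neq0 mN nz; rewrite expfz_pred //.
have qNm : q ^+ (N - m) - 1 != 0.
  by rewrite subr_eq0 lt_eqF // exprn_ilt1 ?ltW // subn_eq0 -ltnNge.
have [Qm QNm] : q ^+ m != 0 /\ q ^+ (N - m) != 0 by rewrite !expf_neq0.
rewrite /aw_eigval -(subnKC (ltnW mN)) exprD => f; rewrite -subr_eq0.
set Q := q ^+ m in f Qm *; set P := q ^+ (N - m) in qNm QNm f *.
have -> : ((Q ^-1 - 1) * (1 - s * Q / q) - ((Q * P)^-1 - 1) * (1 - s * (Q * P) / q))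
  = (P - 1) / (Q * P) * (1 - s * (Q * P / q) * Q) by field_nz.
by rewrite !mulf_neq0 ?invr_eq0 // mulf_neq0.
Qed.

Lemma aw_poly_unique a b c d q N p : 0 < q -> q < 1 -> AW_generic N a b c d q ->
  size p = N.+1 -> p \is monic ->
  (forall z, aw_regular (q ^+ 2) (z ^+ 2) ->
     aw_op a b c d q p z = aw_eigval q (a * b * c * d) N * p.[joukowski z]) ->
  p = aw_poly a b c d q N.
Proof.
move=> q_gt0 q_lt1 gen sp /monicP mp eigen.
have q0 := lt0r_neq0 q_gt0; have nzq := qpoch_qq_neq0 q N q_gt0 q_lt1.
have [a0 _ _ _ nzabcd] := gen.
apply/eqP; rewrite -subr_eq0; apply/eqP.
apply: (aw_op_eigen_eq0 a b c d q N _ a0 q_gt0).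
- have := size_sub_lead _ _ _ (size_aw_poly a b c d q N q0 gen nzq) (eq_leq sp).
  have pN : p`_N = 1 by rewrite -mp lead_coefE sp.
  by rewrite pN (monicP (aw_poly_monic a b c d q N q0 gen nzq)) divr1 scale1r.
- by move=> m mN; apply: aw_eigval_neq.
move=> z zreg; have zreg1 := aw_regular_sqr zreg.
by rewrite aw_opB eigen // aw_op_aw_poly // hornerD hornerN mulrBr.
Qed.

Lemma qpoch_sqr_neq0 q n : 0 < q -> q < 1 -> qpoch (q ^+ 2) (q ^+ 2) n != 0.
Proof. by move=> q_gt0 q_lt1; rewrite qpoch_qq_neq0 ?exprn_gt0 ?exprn_ilt1 ?ltW. Qed.

Lemma aw_poly_even a b q n : 0 < q -> q < 1 ->
  AW_generic (2 * n) a b (- a) (- b) q ->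
  AW_generic n (a ^+ 2) (b ^+ 2) (-1) (- q) (q ^+ 2) ->
  aw_poly a b (- a) (- b) q (2 * n)
  = aw_poly (a ^+ 2) (b ^+ 2) (-1) (- q) (q ^+ 2) n \Po chebyshev2.
Proof.
move=> q_gt0 q_lt1 gen gen2; have q0 := lt0r_neq0 q_gt0.
have q20 : q ^+ 2 != 0 by rewrite expf_neq0.
have nzq2 := qpoch_sqr_neq0 q n q_gt0 q_lt1.
symmetry; apply: aw_poly_unique => //.
- exact/size_comp_chebyshev2/size_aw_poly.
- exact/monic_comp_chebyshev2/aw_poly_monic.
move=> z zreg; have [z0 _ _ _] := aw_regular_sqr zreg.
by rewrite aw_op_comp_even // aw_op_aw_poly // aw_eigval_even // horner_comp_chebyshev2.
Qed.

Lemma aw_poly_odd a b q n : 0 < q -> q < 1 ->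
  AW_generic (2 * n).+1 a b (- a) (- b) q ->
  AW_generic n (a ^+ 2) (b ^+ 2) (- q) (- q ^+ 2) (q ^+ 2) ->
  aw_poly a b (- a) (- b) q (2 * n).+1
  = (aw_poly (a ^+ 2) (b ^+ 2) (- q) (- q ^+ 2) (q ^+ 2) n \Po chebyshev2) * 'X.
Proof.
move=> q_gt0 q_lt1 gen gen2; have q0 := lt0r_neq0 q_gt0.
have q20 : q ^+ 2 != 0 by rewrite expf_neq0.
have nzq2 := qpoch_sqr_neq0 q n q_gt0 q_lt1.
have monicG := monic_comp_chebyshev2 _ (aw_poly_monic _ _ _ _ _ _ q20 gen2 nzq2).
symmetry; apply: aw_poly_unique => //.
- rewrite size_mulX ?monic_neq0 //; congr _.+1.
  exact/size_comp_chebyshev2/size_aw_poly.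
- by rewrite monicMr ?monicX.
move=> z zreg; have [z0 _ _ _] := aw_regular_sqr zreg.
rewrite aw_op_comp_odd // aw_op_aw_poly // -aw_eigval_odd // hornerMX.
by rewrite horner_comp_chebyshev2 //; ring.
Qed.

End Uniqueness.

Theorem mainTheorem5 (R : numClosedFieldType) (q a b : R) (n : nat) :
  0 < q -> q < 1 -> a != 0 -> b != 0 ->
  AW_generic (2 * n) a b (- a) (- b) q ->
  AW_generic (2 * n).+1 a b (- a) (- b) q ->
  AW_generic n (a ^+ 2) (b ^+ 2) (-1) (- q) (q ^+ 2) ->
  AW_generic n (a ^+ 2) (b ^+ 2) (- q) (- q ^+ 2) (q ^+ 2) ->
  forall z : R, z != 0 ->
    AW (2 * n) z a b (- a) (- b) q
      = AW n (z ^+ 2) (a ^+ 2) (b ^+ 2) (-1) (- q) (q ^+ 2)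
    /\ AW (2 * n).+1 z a b (- a) (- b) q
      = (z + z^-1) * AW n (z ^+ 2) (a ^+ 2) (b ^+ 2) (- q) (- q ^+ 2) (q ^+ 2).
Proof.
move=> q_gt0 q_lt1 _ _ genE genO genE2 genO2 z z0.
rewrite !AW_horner ?expf_neq0 // aw_poly_even // aw_poly_odd //.
by rewrite hornerMX !horner_comp_chebyshev2 // mulrC.
Qed.
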